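(* For $n\ge 1$, let $\Delta_n$ be the $n$-dimensional simplex and $C^*_n$ the $n$-dimensional cross-polytope. Then $$\Theta(\Psi(\Delta_n))=[n+1]!\qquad\text{and}\qquad \Theta(\Psi(C^*_n))=[2]^n\cdot[n]!.$$
   Context: For a polytope $V$, $\Psi(V)$ denotes the $\mathbf{a}\mathbf{b}$-index of its face lattice (all faces, including the empty face and $V$ itself, ordered by inclusion; a graded poset of rank $\dim V+1$). The $\mathbf{a}\mathbf{b}$-index of a graded poset $P$ of rank $n+1$ with minimum $\hat 0$, maximum $\hat 1$ and rank function $\rho$ is $\Psi(P)=\sum_{S\subseteq\{1,\dots,n\}} f_S\, v_S$, where for $S=\{s_1<\cdots<s_k\}$, $f_S$ is the number of chains $\hat0<x_1<\cdots<x_k<\hat1$ with $\rho(x_i)=s_i$, and $v_S=v_1\cdots v_n$ with $v_i=\mathbf{b}$ if $i\in S$ and $v_i=\mathbf{a}-\mathbf{b}$ if $i\notin S$; here $\mathbf{a},\mathbf{b}$ are non-commuting variables. The Major MacMahon map $\Theta:\mathbb{Z}\langle\mathbf{a},\mathbf{b}\rangle\to\mathbb{Z}[q]$ is the linear map with $\Theta(u_1\cdots u_n)=\prod_{i:\,u_i=\mathbf{b}}q^i$ on monomials. $[m]=1+q+\cdots+q^{m-1}$ and $[m]!=[m][m-1]\cdots[1]$. *)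

From HB Require Import structures.
From mathcomp Require Import all_boot all_order all_algebra.
Set Implicit Arguments. Unset Strict Implicit. Unset Printing Implicit Defensive.
Import Order.TTheory GRing.Theory Num.Theory.
Local Open Scope ring_scope.

(* A homogeneous element of Z<a,b> of degree n, given by the coefficients of
   its monomials u_1 ... u_n; a monomial is an n-tuple of booleans where
   [true] stands for the letter b and [false] for the letter a. *)
Definition abpoly (n : nat) := {ffun n.-tuple bool -> int}.

(* The monomial v_S = v_1 ... v_n with v_i = b if i in S, v_i = a - b
   otherwise, expanded: the coefficient of the word w in the product
   v_1 ... v_n is the product of the coefficients of w_i in v_i.
   Positions are 0-indexed here: i : 'I_n stands for position i+1. *)
Definition coef_letter (inS : bool) (letter : bool) : int :=
  if inS then (if letter then 1 else 0)
  else (if letter then -1 else 1).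

Definition vS (n : nat) (S : {set 'I_n}) : abpoly n :=
  [ffun w : n.-tuple bool => \prod_(i < n) coef_letter (i \in S) (tnth w i)].

(* For S a subset of {1..n} (encoded as S : {set 'I_n}, i standing for i+1),
   f_S is the number of chains bot < x_1 < ... < x_k < top with
   rk x_j = s_j, where s_1 < ... < s_k are the elements of S. *)
Definition flag_number (T : finType) (lt : rel T) (rk : T -> nat) (bot top : T)
    (n : nat) (S : {set 'I_n}) : nat :=
  #|[pred t : (#|S|).-tuple T |
       path lt bot (rcons (val t) top) &&
       (map rk (val t) == [seq (val i).+1 | i <- enum S])]|.

Definition abindex (T : finType) (lt : rel T) (rk : T -> nat) (bot top : T)
    (n : nat) : abpoly n :=
  [ffun w => \sum_(S : {set 'I_n})
               (flag_number lt rk bot top S)%:Z * vS S w].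

Definition Theta (n : nat) (p : abpoly n) : {poly int} :=
  \sum_(w : n.-tuple bool) p w *: \prod_(i < n | tnth w i) 'X^(i.+1).

Definition qint (m : nat) : {poly int} := \sum_(i < m) 'X^i.
Definition qfact (m : nat) : {poly int} := \prod_(1 <= k < m.+1) qint k.

(* Faces of Delta_n = subsets of its n+1 vertices (empty face and Delta_n
   included), ordered by inclusion; rank = dim + 1 = number of vertices. *)
Definition simplex_lt (n : nat) : rel {set 'I_n.+1} := fun A B => A \proper B.
Definition simplex_rank (n : nat) (A : {set 'I_n.+1}) : nat := #|A|.

Definition Psi_simplex (n : nat) : abpoly n :=
  abindex (@simplex_lt n) (@simplex_rank n) set0 setT n.

(* Vertices of C*_n are +-e_i, encoded as (i, sign) : 'I_n * bool.
   Proper faces (including the empty face) = vertex sets containing no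
   antipodal pair; ordered by inclusion; rank = number of vertices.
   The polytope itself is the extra top element (None), of rank n+1. *)
Definition cross_valid (n : nat) (A : {set 'I_n * bool}) : bool :=
  [forall i : 'I_n, ~~ (((i, true) \in A) && ((i, false) \in A))].

Definition cross_face (n : nat) := option {A : {set 'I_n * bool} | cross_valid A}.

Definition cross_lt (n : nat) : rel (cross_face n) := fun x y =>
  match x, y with
  | Some A, Some B => val A \proper val B
  | Some _, None => true
  | None, _ => false
  end.

Definition cross_rank (n : nat) (x : cross_face n) : nat :=
  match x with Some A => #|val A| | None => n.+1 end.

Lemma cross_valid0 (n : nat) : cross_valid (set0 : {set 'I_n * bool}).
Proof. by apply/forallP => i; rewrite !inE. Qed.

Definition cross_bot (n : nat) : cross_face n := Some (exist _ set0 (cross_valid0 n)).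

Definition Psi_cross (n : nat) : abpoly n :=
  abindex (@cross_lt n) (@cross_rank n) (cross_bot n) None n.

From HB Require Import structures.
From mathcomp Require Import all_boot all_order all_algebra.
From mathcomp Require Import zify ring.
Import GRing.Theory.
Local Open Scope ring_scope.

Set Implicit Arguments. Unset Strict Implicit. Unset Printing Implicit Defensive.

(* Theta sends v_S to prod_(i in S) q^i * prod_(i notin S) (1 - q^i), so
   Theta(Psi(P)) is a weighted count of the chains of P.  Sorting the chains by
   their last element x < 1^ expresses Theta of every lower interval [0^, x]
   through those of the smaller intervals.  When every lower interval below
   x is Boolean, induction on the rank turns this recursion into
     (1 - q)^m Theta[0^, x] = (1 - q)(1 - q^2)...(1 - q^m) * h_x(q),
   where rk x = m + 1 and h_x(q) = sum_(z < x) q^(rk z) (1 - q)^(m - rk z) is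
   the h-polynomial of the boundary of [0^, x].  For a Boolean lattice of rank
   m + 1 the binomial theorem gives (1 - q) h_x = 1 - q^(m+1), whence
   Theta = [m+1]!; this settles the simplex.  For the cross-polytope,
   grouping its faces by the sign pattern they choose on each coordinate gives
   h(q) = (1 + q)^n. *)

Definition qprod (a b : nat) : {poly int} := \prod_(a <= i < b) (1 - 'X^(i.+1)).

Lemma qprod_cat a b c : (a <= b <= c)%N -> qprod a c = qprod a b * qprod b c.
Proof. by case/andP=> hab hbc; rewrite /qprod (big_cat_nat hab hbc). Qed.

Lemma qprodSr m : qprod 0 m.+1 = qprod 0 m * (1 - 'X^(m.+1)).
Proof. by rewrite /qprod big_nat_recr. Qed.

Lemma qprod_ord n a b : (b <= n.+1)%N ->
  \prod_(i < n | (a <= i)%N && (i.+1 < b)%N) (1 - 'X^(i.+1)) = qprod a b.-1.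
Proof.
move=> hb; have hb' : (b.-1 <= n)%N by lia.
rewrite /qprod big_geq_mkord (big_ord_widen_cond _ _ (fun i => 1 - 'X^(i.+1)) hb').
by apply: eq_bigl => i /=; congr (_ && _); lia.
Qed.

Lemma qprod0_ord n b : (b <= n.+1)%N ->
  \prod_(i < n | (i.+1 < b)%N) (1 - 'X^(i.+1)) = qprod 0 b.-1.
Proof. by move=> hb; rewrite -(qprod_ord 0 hb). Qed.

Lemma oneBX_qint k : (1 - 'X) * qint k = 1 - 'X^k.
Proof. by rewrite /qint -opprB -[RHS]opprB subrX1 mulNr. Qed.

Lemma qfact_qprod m : (1 - 'X) ^+ m * qfact m = qprod 0 m.
Proof.
have -> : (1 - 'X) ^+ m = \prod_(1 <= k < m.+1) (1 - 'X : {poly int}).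
  by rewrite prodr_const_nat subn1.
rewrite /qfact /qprod -big_split big_add1 /=; apply: eq_bigr => i _; exact: oneBX_qint.
Qed.

Lemma oneBX_neq0 : (1 - 'X : {poly int}) != 0.
Proof.
apply/eqP => /(congr1 (fun p : {poly int} => p`_1)).
by rewrite coefB coef1 coefX coef0.
Qed.

Lemma qint2 : qint 2 = 1 + 'X.
Proof. by rewrite /qint big_ord_recr big_ord1 /= expr0 expr1. Qed.

Section Binomial.
Variable U : finType.

Lemma sum_subset_card (A : {set U}) (g : nat -> {poly int}) :
  \sum_(Z : {set U} | Z \subset A) g #|Z| = \sum_(k < #|A|.+1) g k *+ 'C(#|A|, k).
Proof.
transitivity (\sum_(Z : {set U} | Z \subset A) \sum_(k < #|A|.+1 | #|Z| == k) g k).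
  apply: eq_bigr => Z hZ.
  have hk : (#|Z| < #|A|.+1)%N by rewrite ltnS subset_leq_card.
  by rewrite (big_pred1 (Ordinal hk)) // => k; rewrite /= -val_eqE eq_sym.
rewrite (exchange_big_dep xpredT) //=; apply: eq_bigr => k _.
rewrite sumr_const -cards_draws; congr (_ *+ _).
by apply: eq_card => Z; rewrite !inE unfold_in /= eq_sym.
Qed.

Lemma sum_subset_binomial (A : {set U}) :
  \sum_(Z : {set U} | Z \subset A) 'X^#|Z| * (1 - 'X) ^+ (#|A| - #|Z|)
    = 1 :> {poly int}.
Proof.
rewrite (sum_subset_card A (fun k => 'X^k * (1 - 'X) ^+ (#|A| - k))).
transitivity ((1 - 'X + 'X : {poly int}) ^+ #|A|); last by rewrite subrK expr1n.
by rewrite exprDn; apply: eq_bigr => k _; rewrite mulrC.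
Qed.

Lemma boolean_hpoly (A : {set U}) : A != set0 ->
  (1 - 'X) * ((1 - 'X) ^+ #|A|.-1 + \sum_(Z : {set U} | (Z \proper A) && (Z != set0))
     'X^#|Z| * (1 - 'X) ^+ (#|A|.-1 - #|Z|)) = 1 - 'X^#|A| :> {poly int}.
Proof.
move=> hA0; have hA : (0 < #|A|)%N by rewrite card_gt0.
have := sum_subset_binomial A.
rewrite (bigD1 set0) ?sub0set //= (bigD1 A) ?subxx //=.
rewrite cards0 subn0 expr0 mul1r subnn expr0 mulr1 => hbin.
rewrite mulrDr -exprS prednK // mulr_sumr -[X in _ = X - _]hbin.
rewrite [X in _ = X - _]addrCA [RHS]addrC addKr; congr (_ + _).
apply: eq_big => [Z|Z /andP[hZ _]].
  by rewrite properEneq; case: (Z \subset A); case: (Z != A); case: (Z != set0).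
rewrite mulrCA -exprS; congr (_ * _ ^+ _).
by have := proper_card hZ; lia.
Qed.

End Binomial.

Section Chains.
Variables (T : finType) (lt : rel T) (rk : T -> nat) (bot : T).

Definition chain_count k x (r : seq nat) : nat :=
  #|[pred t : k.-tuple T | path lt bot (rcons t x) && (map rk t == r)]|.

Lemma tuple_lastI k (u : k.+1.-tuple T) :
  val u = rcons (belast (thead u) (behead u)) (last (thead u) (behead u)).
Proof. by rewrite -lastI {1}(tuple_eta u). Qed.

Lemma chain_count_rcons k x r a :
  chain_count k.+1 x (rcons r a) =
  (\sum_(z | lt z x && (rk z == a)) chain_count k z r)%N.
Proof.
rewrite /chain_count -sum1_card.
rewrite (reindex (fun p : k.-tuple T * T => [tuple of rcons p.1 p.2])) /=; last first.
  exists (fun t : k.+1.-tuple T =>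
            ([tuple of belast (thead t) (behead t)], last (thead t) (behead t))).
    move=> [t z] _ /=.
    have := tuple_lastI [tuple of rcons t z]; rewrite /= => /eqP.
    rewrite eqseq_rcons => /andP[/eqP e1 /eqP e2].
    by congr pair; [apply: val_inj; rewrite /= -e1 | rewrite -e2].
  by move=> u _; apply: val_inj; rewrite /= -tuple_lastI.
rewrite -(pair_big_dep xpredT (fun (t : k.-tuple T) (z : T) =>
  path lt bot (rcons (rcons t z) x) && (map rk (rcons t z) == rcons r a))
  (fun _ _ => 1%N)) /=.
under eq_bigr => t _ do rewrite big_mkcond /=.
rewrite exchange_big /= [RHS]big_mkcond /=; apply: eq_bigr => z _.
rewrite -sum1_card [in RHS]big_mkcond /=; case: ifP => hz.
  apply: eq_bigr => t _; rewrite rcons_path last_rcons map_rcons eqseq_rcons.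
  by case/andP: hz => -> ->; rewrite !andbT.
rewrite big1 // => t _; rewrite rcons_path last_rcons map_rcons eqseq_rcons.
by move: hz; case: (lt z x); case: (rk z == a); rewrite //= !andbF.
Qed.

End Chains.

Section SetsOfOrdinals.
Variable n : nat.

Definition max_elt (S : {set 'I_n}) (j : 'I_n) :=
  (j \in S) && (S \subset [set i : 'I_n | (i <= j)%N]).

Lemma max_elt_uniq S j1 j2 : max_elt S j1 -> max_elt S j2 -> j1 = j2.
Proof.
case/andP=> h1 /subsetP s1 /andP[h2 /subsetP s2]; apply: val_inj.
have := s1 _ h2; have := s2 _ h1; rewrite !inE => a b.
by apply/eqP; rewrite eqn_leq a b.
Qed.

Lemma max_eltP S : S != set0 -> {j | max_elt S j}.
Proof.
rewrite -card_gt0 => hS.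
have [i0 hi0 hmax] := eq_bigmax_cond (fun i : 'I_n => val i) hS.
exists i0; rewrite /max_elt hi0; apply/subsetP => i hi; rewrite inE -hmax.
exact: leq_bigmax_cond.
Qed.

Lemma max_elt_setU1 (j : 'I_n) (S : {set 'I_n}) :
  max_elt (j |: S) j = (S \subset [set i : 'I_n | (i <= j)%N]).
Proof. by rewrite /max_elt setU11 subUset sub1set !inE leqnn. Qed.

Lemma sum_nonempty_by_max (F : {set 'I_n} -> {poly int}) :
  \sum_(S : {set 'I_n} | S != set0) F S =
  \sum_(j < n) \sum_(S : {set 'I_n} | S \subset [set i : 'I_n | (i < j)%N]) F (j |: S).
Proof.
have by_max (j : 'I_n) : \sum_(S : {set 'I_n} | max_elt S j) F S =
    \sum_(S : {set 'I_n} | S \subset [set i : 'I_n | (i < j)%N]) F (j |: S).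
  rewrite (reindex_onto (fun S => j |: S) (fun S => S :\ j)); last first.
    by move=> S /andP[hj _]; rewrite setD1K.
  apply: eq_bigl => S; rewrite max_elt_setU1; apply/andP/idP.
    case=> /subsetP hs /eqP hD; apply/subsetP => i hi.
    have hij : i != j by apply: contraTneq hi => ->; rewrite -hD setD11.
    by have := hs i hi; rewrite !inE ltn_neqAle val_eqE hij.
  move/subsetP => hs.
  have hjS : j \notin S by apply/negP => /hs; rewrite inE ltnn.
  split; last by rewrite setU1K.
  by apply/subsetP => i /hs; rewrite !inE => /ltnW.
under [RHS]eq_bigr => j _ do rewrite -by_max big_mkcond /=.
rewrite exchange_big /= [LHS]big_mkcond /=; apply: eq_bigr => S _.
have [->|hS] := eqVneq S set0.
  by rewrite big1 // => j _; rewrite /max_elt inE.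
have [j hj] := max_eltP hS.
rewrite -big_mkcond /= (big_pred1 j) // => k /=.
by apply/idP/idP => [hk | /eqP ->]; rewrite ?(max_elt_uniq hk hj).
Qed.

Lemma sorted_enum_set (A : {set 'I_n}) : sorted ltn (map val (enum A)).
Proof.
rewrite -[enum _](eq_filter (mem_enum _)).
rewrite -(eq_filter (mem_map val_inj _)) -filter_map.
by rewrite (sorted_filter ltn_trans) // unlock val_ord_enum iota_ltn_sorted.
Qed.

Lemma enum_setU1_max (j : 'I_n) (S : {set 'I_n}) :
  S \subset [set i : 'I_n | (i < j)%N] ->
  map val (enum (j |: S)) = rcons (map val (enum S)) (val j).
Proof.
move=> /subsetP hs.
apply: (irr_sorted_eq ltn_trans ltnn); first exact: sorted_enum_set.
  rewrite (sorted_pairwise ltn_trans) -cats1 pairwise_cat /= andbT.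
  rewrite -(sorted_pairwise ltn_trans) sorted_enum_set andbT.
  apply/allrelP => a b /mapP[i hi ->]; rewrite inE => /eqP ->.
  by rewrite mem_enum in hi; have := hs i hi; rewrite inE.
move=> y; rewrite mem_rcons inE; apply/mapP/idP.
  case=> i; rewrite mem_enum !inE => /orP[/eqP -> | hi] ->; rewrite ?eqxx //.
  by apply/orP; right; apply: map_f; rewrite mem_enum.
case/orP=> [/eqP -> | /mapP[i hi ->]].
  by exists j => //; rewrite mem_enum setU11.
by exists i => //; rewrite mem_enum !inE -(mem_enum S) hi orbT.
Qed.

End SetsOfOrdinals.

Section MacMahon.
Variable n : nat.

Definition theta_letter (S : {set 'I_n}) (i : 'I_n) : {poly int} :=
  if i \in S then 'X^(i.+1) else 1 - 'X^(i.+1).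

Lemma Theta_vS (S : {set 'I_n}) : Theta (vS S) = \prod_(i < n) theta_letter S i.
Proof.
have -> : \prod_(i < n) theta_letter S i = \prod_(i < n) \sum_(b : bool)
    ((coef_letter (i \in S) b)%:P * (if b then 'X^(i.+1) else 1)).
  apply: eq_bigr => i _; rewrite big_bool /= /theta_letter /coef_letter.
  case: (i \in S) => /=; first by rewrite polyC1 polyC0 mul1r mul0r addr0.
  by rewrite polyCN polyC1 mulN1r mulr1 addrC.
rewrite bigA_distr_bigA /= /Theta.
rewrite (reindex (fun g : {ffun 'I_n -> bool} => [tuple g i | i < n])) /=; last first.
  exists (fun w : n.-tuple bool => [ffun i => tnth w i]) => g _.
    by apply/ffunP => i; rewrite ffunE tnth_mktuple.
  by apply: eq_from_tnth => i; rewrite tnth_mktuple ffunE.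
apply: eq_bigr => g _.
rewrite /vS ffunE -mul_polyC rmorph_prod [X in _ * X]big_mkcond -big_split /=.
by apply: eq_bigr => i _; rewrite !tnth_mktuple.
Qed.

End MacMahon.

Section GradedPoset.
Variables (T : finType) (lt : rel T) (rk : T -> nat) (bot : T) (n : nat).
Hypothesis lt_rk : forall a b, lt a b -> (rk a < rk b)%N.

Local Notation flag := (flag_number lt rk bot).

Lemma Theta_abindex top : Theta (abindex lt rk bot top n) =
  \sum_(S : {set 'I_n}) (flag top S)%:R * \prod_(i < n) theta_letter S i.
Proof.
rewrite /Theta; under eq_bigr => w _ do rewrite ffunE scaler_suml.
rewrite exchange_big /=; apply: eq_bigr => S _.
rewrite -Theta_vS /Theta mulr_sumr; apply: eq_bigr => w _.
by rewrite -scalerA -[Posz _]natz scaler_nat mulr_natl.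
Qed.

Lemma flag_number_set0 x : flag x (set0 : {set 'I_n}) = lt bot x.
Proof.
rewrite /flag_number cards0.
case hx: (lt bot x).
  apply: (@eq_card1 _ [tuple]) => t; rewrite [t]tuple0 !inE /= hx.
  by apply/eqP; rewrite enum_set0.
by apply: eq_card0 => t; rewrite [t]tuple0 !inE /= hx.
Qed.

Lemma path_rank_lt b t x : path lt b (rcons t x) ->
  (rk b < rk x)%N /\ (forall y, y \in t -> (rk y < rk x)%N).
Proof.
elim: t b => [|y t IH] b /=; first by case/andP=> /lt_rk.
case/andP=> hby /IH [h1 h2]; split; first exact: ltn_trans (lt_rk hby) h1.
by move=> z; rewrite inE => /orP[/eqP -> | /h2].
Qed.

Lemma flag_number_support x (S : {set 'I_n}) :
  flag x S != 0%N -> S \subset [set i : 'I_n | (i.+1 < rk x)%N].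
Proof.
apply: contraR => /subsetPn [i hi]; rewrite inE => hni.
apply/eqP/eq_card0 => t; rewrite !inE; apply/negP => /andP[/path_rank_lt [_ h] /eqP hm].
have : (val i).+1 \in [seq rk y | y <- val t].
  by rewrite hm; apply/mapP; exists i => //; rewrite mem_enum.
by case/mapP => y /h hy hyi; rewrite hyi hy in hni.
Qed.

Lemma flag_number_setU1 x (j : 'I_n) (S : {set 'I_n}) :
  S \subset [set i : 'I_n | (i < j)%N] ->
  flag x (j |: S) = (\sum_(z | lt z x && (rk z == j.+1)) flag z S)%N.
Proof.
move=> hs.
have hj : j \notin S by apply/negP => /(subsetP hs); rewrite inE ltnn.
have em : [seq (val i).+1 | i <- enum (j |: S)] =
          rcons [seq (val i).+1 | i <- enum S] j.+1.
  by rewrite (map_comp succn val) enum_setU1_max // map_rcons -map_comp.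
rewrite /flag_number cardsU1 hj em.
exact: (chain_count_rcons lt rk bot #|S| x).
Qed.

Lemma prod_theta_letter_setU1 x (j : 'I_n) (S : {set 'I_n}) :
  S \subset [set i : 'I_n | (i < j)%N] -> (j.+1 < rk x)%N ->
  \prod_(i < n | (i.+1 < rk x)%N) theta_letter (j |: S) i =
  'X^(j.+1) * \prod_(i < n | (j.+1 <= i)%N && (i.+1 < rk x)%N) (1 - 'X^(i.+1))
    * \prod_(i < n | (i.+1 < j.+1)%N) theta_letter S i.
Proof.
move=> /subsetP hs hjx.
rewrite (bigD1 j) //= {1}/theta_letter setU11 -mulrA; congr (_ * _).
rewrite (bigID (fun i : 'I_n => (i < j)%N)) /= mulrC; congr (_ * _).
  apply: eq_big => i.
    rewrite -leqNgt; have [->|hij] /= := eqVneq i j; first by rewrite ltnn !andbF.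
    rewrite andbT; case: (i.+1 < rk x)%N; rewrite ?andbF //= andbT.
    by rewrite (ltn_neqAle j) eq_sym val_eqE hij.
  case/andP=> /andP[_ hij] hle; rewrite /theta_letter !inE (negPf hij).
  by case: ifP => // /hs; rewrite inE => hlt; rewrite hlt in hle.
apply: eq_big => i.
  rewrite ltnS; case: (ltnP i j) => hij; rewrite ?andbF //= andbT.
  by rewrite (leq_ltn_trans hij (ltnW hjx)) -val_eqE /= neq_ltn hij.
case/andP=> _ hij; rewrite /theta_letter !inE.
by rewrite -val_eqE /= (ltn_eqF hij).
Qed.

Lemma sum_by_rank (P : pred T) (G : T -> {poly int}) :
  \sum_(j < n) \sum_(z | P z && (rk z == j.+1)) G z =
  \sum_(z | P z && (0 < rk z <= n)%N) G z.
Proof.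
under eq_bigr => j _ do rewrite big_mkcond /=.
rewrite exchange_big /= [RHS]big_mkcond /=; apply: eq_bigr => z _.
case: (P z) => /=; last by rewrite big1.
case: (posnP (rk z)) => [hz|hz] /=; first by rewrite big1 // => j _; rewrite hz.
case: (leqP (rk z) n) => hzn /=; last first.
  by rewrite big1 // => j _; case: eqP => // e; move: (ltn_ord j) hzn; rewrite e; lia.
have hj : ((rk z).-1 < n)%N by rewrite prednK.
rewrite -big_mkcond /= (big_pred1 (Ordinal hj)) // => j /=.
by rewrite -val_eqE /=; apply/eqP/eqP => [->|->]; rewrite ?prednK.
Qed.

(* Theta of the ab-index of the lower interval [bot, x], of rank [rk x]. *)
Definition theta_below x : {poly int} := \sum_(S : {set 'I_n})
  (flag x S)%:R * \prod_(i < n | (i.+1 < rk x)%N) theta_letter S i.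

Lemma Theta_abindex_top top : rk top = n.+1 ->
  Theta (abindex lt rk bot top n) = theta_below top.
Proof.
move=> htop; rewrite Theta_abindex; apply: eq_bigr => S _; congr (_ * _).
by apply: eq_bigl => i; rewrite htop ltnS ltn_ord.
Qed.

Lemma theta_below_rec x :
  theta_below x = (lt bot x)%:R * \prod_(i < n | (i.+1 < rk x)%N) (1 - 'X^(i.+1))
   + \sum_(z | lt z x && (0 < rk z <= n)%N)
       ('X^(rk z) * \prod_(i < n | (rk z <= i)%N && (i.+1 < rk x)%N) (1 - 'X^(i.+1)))
       * theta_below z.
Proof.
rewrite /theta_below (bigD1 set0) //= flag_number_set0; congr (_ * _ + _).
  by apply: eq_bigr => i _; rewrite /theta_letter inE.
rewrite sum_nonempty_by_max -sum_by_rank; apply: eq_bigr => j _.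
under eq_bigr => S hS do rewrite (flag_number_setU1 _ hS) natr_sum mulr_suml.
rewrite exchange_big /=; apply: eq_bigr => z /andP[hzx /eqP hz].
have hjx : (j.+1 < rk x)%N by rewrite -hz; apply: lt_rk.
under eq_bigr => S hS do rewrite (prod_theta_letter_setU1 hS hjx) -hz mulrCA.
rewrite -mulr_sumr; congr (_ * _).
rewrite [RHS](bigID (fun S : {set 'I_n} => S \subset [set i : 'I_n | (i < j)%N])) /=.
rewrite [X in _ = _ + X]big1 ?addr0 // => S hS.
have [-> | /flag_number_support hsup] := eqVneq (flag z S) 0%N; first by rewrite mul0r.
case/negP: hS; apply/subsetP => i /(subsetP hsup).
by rewrite !inE hz ltnS.
Qed.

Definition hpoly x : {poly int} := (1 - 'X) ^+ (rk x).-1 +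
  \sum_(z | lt z x && (0 < rk z)%N) 'X^(rk z) * (1 - 'X) ^+ ((rk x).-1 - rk z).

Lemma theta_below_hpoly x : lt bot x -> (rk x <= n.+1)%N ->
  (forall z, lt z x -> (0 < rk z)%N ->
     (1 - 'X) ^+ rk z * theta_below z = qprod 0 (rk z)) ->
  (1 - 'X) ^+ (rk x).-1 * theta_below x = qprod 0 (rk x).-1 * hpoly x.
Proof.
move=> hbot hx IH; set m := (rk x).-1.
rewrite theta_below_rec hbot mul1r qprod0_ord // mulrDr /hpoly mulrDr mulrC.
congr (_ + _); rewrite !mulr_sumr; apply: eq_big => [z | z /andP[hzx hz]].
  by apply: andb_id2l => /lt_rk hzx; apply: andb_idr => _; lia.
have hzm : (rk z <= m)%N by have := lt_rk hzx; lia.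
have -> : (1 - 'X) ^+ m = (1 - 'X) ^+ (m - rk z) * (1 - 'X) ^+ rk z :> {poly int}.
  by rewrite -exprD subnK.
rewrite qprod_ord // -/m (@qprod_cat 0 (rk z)) ?hzm // -IH //; last by case/andP: hz.
ring.
Qed.

Lemma theta_below_boolean (P : pred T) :
  (forall x z, P x -> lt z x -> (0 < rk z)%N -> P z) ->
  (forall x, P x -> (0 < rk x)%N -> lt bot x /\ (1 - 'X) * hpoly x = 1 - 'X^(rk x)) ->
  forall x, P x -> (0 < rk x <= n.+1)%N ->
    (1 - 'X) ^+ rk x * theta_below x = qprod 0 (rk x).
Proof.
move=> P_down P_bool x; have [k] := ubnP (rk x); elim: k x => // k IH x hk Px.
case/andP=> hx0 hxn; have [hbot hh] := P_bool x Px hx0.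
rewrite -(prednK hx0) exprS -mulrA theta_below_hpoly //; last first.
  move=> z hzx hz0; have := lt_rk hzx => hzx'.
  by apply: IH; [lia | exact: P_down hzx hz0 | lia].
by rewrite mulrCA hh qprodSr prednK.
Qed.

End GradedPoset.

Lemma Theta_Psi_simplex n : Theta (Psi_simplex n) = qfact n.+1.
Proof.
have lt_rk (A B : {set 'I_n.+1}) : simplex_lt A B -> (simplex_rank A < simplex_rank B)%N.
  exact: proper_card.
have rk_top : simplex_rank [set: 'I_n.+1] = n.+1 by rewrite /simplex_rank cardsT card_ord.
have boolean (X : {set 'I_n.+1}) : true -> (0 < simplex_rank X)%N ->
    simplex_lt set0 X /\
    (1 - 'X) * hpoly (@simplex_lt n) (@simplex_rank n) X = 1 - 'X^(simplex_rank X).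
  rewrite /simplex_rank card_gt0 => _ hX; split; first by rewrite /simplex_lt proper0.
  rewrite -boolean_hpoly //; congr (_ * (_ + _)).
  by apply: eq_bigl => Z; rewrite card_gt0.
have := theta_below_boolean lt_rk (bot := set0) (n := n) (P := predT)
  (fun _ _ _ _ _ => isT) boolean (x := setT) isT.
rewrite rk_top leqnn /= -qfact_qprod => /(_ isT) /(mulfI (expf_neq0 _ oneBX_neq0)).
by rewrite /Psi_simplex Theta_abindex_top.
Qed.

Section CrossPolytope.
Variable n : nat.
Local Notation U := ('I_n * bool)%type.

Lemma cross_valid_card (A : {set U}) : cross_valid A -> (#|A| <= n)%N.
Proof.
move=> /forallP hv.
have inj : {in A &, injective (fun p : U => p.1)}.
  move=> [i b] [j c] hA hB /= eij; subst j.
  have [-> // | hbc] := eqVneq b c; have := hv i.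
  by case: b c hbc hA hB => [] [] //= _ -> ->.
rewrite -(card_in_imset inj); apply: leq_trans (max_card _) _; by rewrite card_ord.
Qed.

Lemma cross_valid_subset (A B : {set U}) :
  cross_valid A -> B \subset A -> cross_valid B.
Proof.
move=> /forallP hv /subsetP hs; apply/forallP => i; apply/negP => /andP[h1 h2].
by have := hv i; rewrite (hs _ h1) (hs _ h2).
Qed.

Lemma cross_lt_rank (a b : cross_face n) :
  cross_lt a b -> (cross_rank a < cross_rank b)%N.
Proof.
case: a => [A|] //; case: b => [B|] /=; first exact: proper_card.
by move=> _; rewrite ltnS; apply: cross_valid_card (valP A).
Qed.

Lemma sum_cross_face (P : pred (cross_face n)) (F : cross_face n -> {poly int}) :
  P None = false ->
  \sum_(z | P z) F z =
  \sum_(Z : {set U} | P (insub Z) && cross_valid Z) F (insub Z).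
Proof.
move=> hN; rewrite (reindex_omap (fun Z : {set U} => insub Z : cross_face n)
                     (fun z : cross_face n => omap val z)) /=.
  apply: eq_bigl => Z; congr (_ && _).
  case: insubP => [B hB <- | hB] /=; last by rewrite (negbTE hB).
  by rewrite eqxx; symmetry; exact: (valP B).
by move=> [B|] hP /=; [rewrite valK | rewrite hN in hP].
Qed.

Lemma cross_hpoly_face (A : {set U}) (hA : cross_valid A) : A != set0 ->
  (1 - 'X) * hpoly (@cross_lt n) (@cross_rank n) (Some (exist _ A hA)) = 1 - 'X^#|A|.
Proof.
move=> hA0; rewrite -boolean_hpoly // /hpoly sum_cross_face //=; congr (_ * (_ + _)).
apply: eq_big => [Z | Z /andP[_ hZ]]; last by rewrite (insubT (@cross_valid n) hZ).
case hZ: (cross_valid Z); last first.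
  rewrite andbF; apply/esym/negbTE/negP => /andP[/proper_sub].
  by move/(cross_valid_subset hA); rewrite hZ.
by rewrite (insubT (@cross_valid n) hZ) /= card_gt0 andbT.
Qed.

(* Valid vertex sets are the sign patterns [f : 'I_n -> option bool]; [f i = None]
   means that neither +e_i nor -e_i is chosen. *)
Definition sign_set (f : {ffun 'I_n -> option bool}) : {set U} :=
  [set p : U | f p.1 == Some p.2].

Lemma card_sign_set f : #|sign_set f| = #|[set i | f i != None]|.
Proof.
rewrite -!sum1_card big_mkcond [RHS]big_mkcond /=.
rewrite (eq_bigr (fun p : U => if (p.1, p.2) \in sign_set f then 1%N else 0%N)); last by case.
rewrite -(pair_bigA _ (fun i b => if (i, b) \in sign_set f then 1%N else 0%N)) /=.
by apply: eq_bigr => i _; rewrite big_bool !inE /=; case: (f i) => [[]|].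
Qed.

Lemma sum_cross_valid :
  \sum_(Z : {set U} | cross_valid Z) 'X^#|Z| * (1 - 'X) ^+ (n - #|Z|)
    = (1 + 'X : {poly int}) ^+ n.
Proof.
pose wt (o : option bool) : {poly int} := if o is Some _ then 'X else 1 - 'X.
have -> : (1 + 'X : {poly int}) ^+ n = \prod_(i < n) \sum_(o : option bool) wt o.
  rewrite -[n in LHS]card_ord -prodr_const; apply: eq_bigr => i _.
  rewrite (bigD1 None) //= (bigD1 (Some true)) //= (bigD1 (Some false)) //= big1.
    by rewrite addr0 addrA subrK.
  by case=> [[]|].
rewrite bigA_distr_bigA /= (reindex sign_set) /=; last first.
  exists (fun Z : {set U} => [ffun i => if (i, true) \in Z then Some true
                       else if (i, false) \in Z then Some false else None]).
    by move=> f _; apply/ffunP => i; rewrite ffunE !inE /=; case: (f i) => [[]|].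
  move=> Z /forallP hv; apply/setP => [[i b]]; rewrite !inE ffunE /=.
  by have := hv i; case: b; case: ((i, true) \in Z); case: ((i, false) \in Z).
rewrite big_mkcond /=; apply: eq_bigr => f _.
have -> : cross_valid (sign_set f).
  by apply/forallP => i; rewrite !inE /=; case: (f i) => [[]|].
rewrite card_sign_set (bigID (fun i => f i != None)) /=.
rewrite (eq_bigr (fun _ => 'X)); last by move=> i; case: (f i).
rewrite [X in _ = _ * X](eq_bigr (fun _ => 1 - 'X)); last by move=> i; case: (f i).
rewrite !prodr_const; congr (_ ^+ _ * _ ^+ _); first by apply: eq_card => i; rewrite inE.
transitivity #|~: [set i | f i != None]|; last by apply: eq_card => i; rewrite !inE.
by rewrite cardsCs setCK card_ord.
Qed.

Lemma cross_hpoly_top : hpoly (@cross_lt n) (@cross_rank n) None = (1 + 'X) ^+ n.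
Proof.
rewrite -sum_cross_valid (bigD1 set0) ?cross_valid0 //= cards0 subn0 expr0 mul1r.
rewrite /hpoly sum_cross_face //=; congr (_ + _); apply: eq_big => [Z | Z /andP[_ hZ]].
  case hZ: (cross_valid Z); rewrite ?andbF // (insubT (@cross_valid n) hZ) /=.
  by rewrite card_gt0 andbT.
by rewrite (insubT (@cross_valid n) hZ).
Qed.

End CrossPolytope.

Lemma Theta_Psi_cross n : Theta (Psi_cross n) = qint 2 ^+ n * qfact n.
Proof.
have faces (z : cross_face n) : cross_lt z None -> (0 < cross_rank z)%N ->
    (1 - 'X) ^+ cross_rank z * theta_below (@cross_lt n) (@cross_rank n) (cross_bot n) n z
    = qprod 0 (cross_rank z).
  move=> hz hz0; apply: (theta_below_boolean (@cross_lt_rank n) (P := fun z => z != None)).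
  - by move=> x [].
  - move=> [[A hA]|] // _ hA0; split; first by rewrite /= proper0 -card_gt0.
    by apply: cross_hpoly_face; rewrite -card_gt0.
  - by case: z hz {hz0}.
  - by case: z hz hz0 => [[A hA]|] //= _ ->; rewrite ltnW ?ltnS ?cross_valid_card.
have := theta_below_hpoly (@cross_lt_rank n) (bot := cross_bot n) (x := None) isT (leqnn _) faces.
rewrite cross_hpoly_top /= -qfact_qprod -mulrA => /(mulfI (expf_neq0 _ oneBX_neq0)).
by rewrite /Psi_cross Theta_abindex_top // qint2 mulrC.
Qed.

Unset Implicit Arguments.

Theorem mainTheorem2 (n : nat) (hn : (1 <= n)%N) :
  Theta (Psi_simplex n) = qfact n.+1 /\
  Theta (Psi_cross n) = qint 2 ^+ n * qfact n.
Proof. by split; [exact: Theta_Psi_simplex | exact: Theta_Psi_cross]. Qed.
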